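(* Let $(\hat x_0,\chi,\lambda_0,\bar\varepsilon)\in \mathrm{dom}\, h\times[0,1)\times\mathbb{R}_{++}\times\mathbb{R}_{++}$ and run the method U-CS$(\hat x_0,\chi,\lambda_0,\bar\varepsilon)$ described in the context. Let $(\mu,\nu)=(\mu(\phi),\mu(h))$ and \[ Q(\bar\varepsilon)=\frac{8M_f^2}{(1-\chi)^2}+\bar\varepsilon\left(\lambda_0^{-1}+\frac{2L_f}{(1-\chi)^2}\right). \] Then U-CS terminates in at most \[ \min\left\{\min\left[\frac{1}{\chi}\left(1+\frac{Q(\bar\varepsilon)}{\mu\bar\varepsilon}\right),\ 1+\frac{Q(\bar\varepsilon)}{\nu\bar\varepsilon}\right]\log\left(1+\frac{\mu d_0^2}{\bar\varepsilon}\right),\ \frac{d_0^2Q(\bar\varepsilon)}{\bar\varepsilon^2}\right\}+\left\lceil 2\log\frac{\lambda_0 Q(\bar\varepsilon)}{\bar\varepsilon}\right\rceil \] iterations.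
   Context: Setting: $f,h:\mathbb{R}^n\to\mathbb{R}\cup\{+\infty\}$ are proper lower semicontinuous convex functions with $\mathrm{dom}\, h\subseteq\mathrm{dom}\, f$, $\phi=f+h$, $\phi_*=\inf_x\phi(x)$. A subgradient oracle $f':\mathrm{dom}\, h\to\mathbb{R}^n$ with $f'(x)\in\partial f(x)$ is available, and there are $M_f,L_f\ge0$ with $\|f'(x)-f'(y)\|\le 2M_f+L_f\|x-y\|$ for all $x,y\in\mathrm{dom}\, h$. The set $X_*$ of minimizers of $\phi$ is nonempty. For $x\in\mathrm{dom}\, h$, $\ell_f(u;x):=f(x)+\langle f'(x),u-x\rangle$. For a proper convex function $\psi$, $\mu(\psi)$ denotes the largest $\mu\ge0$ such that $\psi-\frac{\mu}{2}\|\cdot\|^2$ is convex. $d_0:=\min\{\|x-\hat x_0\|:x\in X_*\}$; $\log$ is the natural logarithm. Method U-CS$(\hat x_0,\chi,\lambda_0,\bar\varepsilon)$: Step 0: set $\lambda=\lambda_0$, $k=1$. Step 1: compute $x=\mathrm{argmin}_{u\in\mathbb{R}^n}\{\ell_f(u;\hat x_{k-1})+h(u)+\frac{1}{2\lambda}\|u-\hat x_{k-1}\|^2\}$; if $\phi(x)-\phi_*\le\bar\varepsilon$, stop. Step 2: if $f(x)-\ell_f(x;\hat x_{k-1})-(1-\chi)\|x-\hat x_{k-1}\|^2/(2\lambda)\le(1-\chi)\bar\varepsilon/2$ does not hold, set $\lambda=\lambda/2$ and go to Step 1; else set $\lambda_k=\lambda$, $\hat x_k=x$, $k\leftarrow k+1$,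 and go to Step 1. Conventions: $1/0=+\infty$; when $\mu=0$ the first entry of the outer minimum is interpreted as $+\infty$ (so the first term of the bound equals $d_0^2Q(\bar\varepsilon)/\bar\varepsilon^2$). *)

From HB Require Import structures.
From mathcomp Require Import all_boot all_order all_algebra.
From mathcomp Require Import all_classical all_reals.
From mathcomp Require Import ereal exp.
Set Implicit Arguments. Unset Strict Implicit. Unset Printing Implicit Defensive.
Import Order.TTheory GRing.Theory Num.Theory.
Local Open Scope classical_set_scope.
Local Open Scope ring_scope.

Section UCS.
Variables (R : realType) (n : nat).
Local Notation V := 'rV[R]_n.

Definition dotp (u v : V) : R := \sum_(i < n) u ord0 i * v ord0 i.
Definition enorm (u : V) : R := Num.sqrt (dotp u u).

Local Open Scope ereal_scope.

Definition dom (psi : V -> \bar R) : set V := [set x | psi x < +oo].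

Definition proper_fun (psi : V -> \bar R) : Prop :=
  (forall x, -oo < psi x) /\ (exists x, psi x < +oo).

Definition convex_fun (psi : V -> \bar R) : Prop :=
  forall (x y : V) (t : R), (0 < t < 1)%R ->
    psi (t *: x + (1 - t) *: y)%R <= t%:E * psi x + (1 - t)%:E * psi y.

Definition lsc_fun (psi : V -> \bar R) : Prop :=
  forall (x : V) (a : R), a%:E < psi x ->
    exists2 d : R, (0 < d)%R & forall y, (enorm (y - x)%R < d)%R -> a%:E < psi y.

Definition strongly_convex_mod (psi : V -> \bar R) (m : R) : Prop :=
  convex_fun (fun x => psi x - (m / 2 * enorm x ^+ 2)%R%:E).

Definition is_mu (psi : V -> \bar R) (mu : R) : Prop :=
  (0 <= mu)%R /\ strongly_convex_mod psi mu /\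
  (forall m, (0 <= m)%R -> strongly_convex_mod psi m -> (m <= mu)%R).

Definition is_subgrad (f : V -> \bar R) (x g : V) : Prop :=
  forall u, f x + (dotp g (u - x)%R)%:E <= f u.

Definition phi_of (f h : V -> \bar R) : V -> \bar R := fun x => f x + h x.

Definition phistar (phi : V -> \bar R) : \bar R := ereal_inf (range phi).

Definition Xstar (phi : V -> \bar R) : set V :=
  [set x | forall y, phi x <= phi y].

Definition dist0 (phi : V -> \bar R) (x0 : V) : R :=
  inf [set enorm (x - x0)%R | x in Xstar phi].

Definition ell (f : V -> \bar R) (f' : V -> V) (x u : V) : \bar R :=
  f x + (dotp (f' x) (u - x)%R)%:E.

Definition subprob (f h : V -> \bar R) (f' : V -> V) (lam : R) (c u : V) : \bar R :=
  ell f f' c u + h u + ((2 * lam)^-1 * enorm (u - c)%R ^+ 2)%R%:E.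

Definition is_argmin (F : V -> \bar R) (x : V) : Prop := forall u, F x <= F u.

Definition stop_test (phi : V -> \bar R) (eps : R) (x : V) : Prop :=
  phi x - phistar phi <= eps%:E.

Definition accept_test (f : V -> \bar R) (f' : V -> V) (chi eps lam : R)
    (c x : V) : Prop :=
  f x - ell f f' c x - ((1 - chi) * enorm (x - c)%R ^+ 2 / (2 * lam))%R%:E
    <= ((1 - chi) * eps / 2)%R%:E.

(* A run of U-CS(x0, chi, lam0, eps), indexed by the successive executions
   j = 0, 1, 2, ... of Step 1: at execution j, the current stepsize is lam j,
   the current prox center is ctr j, and Step 1 computes xs j. *)
Definition UCS_run (f h : V -> \bar R) (f' : V -> V) (x0 : V) (chi lam0 eps : R)
    (lam : nat -> R) (ctr xs : nat -> V) : Prop :=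
  [/\ lam 0%N = lam0, ctr 0%N = x0,
      (forall j, is_argmin (subprob f h f' (lam j) (ctr j)) (xs j)) &
      (forall j, ~ stop_test (phi_of f h) eps (xs j) ->
         (accept_test f f' chi eps (lam j) (ctr j) (xs j) ->
            lam j.+1 = lam j /\ ctr j.+1 = xs j) /\
         (~ accept_test f f' chi eps (lam j) (ctr j) (xs j) ->
            lam j.+1 = (lam j / 2)%R /\ ctr j.+1 = ctr j))].

Definition Qe (Mf Lf chi lam0 eps : R) : R :=
  (8 * Mf ^+ 2 / (1 - chi) ^+ 2 + eps * (lam0^-1 + 2 * Lf / (1 - chi) ^+ 2))%R.

Definition invE (x : R) : \bar R := if x == 0%R then +oo else (x^-1)%:E.

Definition ucs_bound (mu nu Q d0 chi lam0 eps : R) : \bar R :=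
  let last := ((d0 ^+ 2 * Q / eps ^+ 2)%R)%:E in
  let first :=
    if mu == 0%R then last
    else Order.min
      (Order.min (invE chi * (1 + Q / (mu * eps))%R%:E)
                 (1%E + Q%:E * invE (nu * eps))
        * (ln (1 + mu * d0 ^+ 2 / eps)%R)%:E)
      last in
  first + ((Num.ceil (2 * ln (lam0 * Q / eps)%R)%R)%:~R : R)%:E.

End UCS.

(* Chaining subgradient inequalities along [c, x]
   gives f(x) - l_f(x; c) <= 2 M_f |x - c| + L_f |x - c|^2 / 2, so by Young's
   inequality every step with lambda Q(eps) <= 2 eps is accepted; hence
   lambda >= eps / Q(eps) throughout and there are at most 2 log(lambda_0 Q(eps) / eps)
   rejections.  At an accepted step that does not stop, the prox three-point
   inequality, the subgradient inequality at the prox centre c and the acceptance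
   test give, for every minimizer x*,
     lambda eps + (1 + lambda sigma) |x* - x|^2 < |x* - c|^2
   with sigma = nu, and with sigma = mu chi when phi is compared at (1 - chi) x* + chi x.
   Summing these with sigma = 0 bounds the number of acceptances by d_0^2 Q(eps) / eps^2;
   iterating them, |x* - c|^2 + K (K = eps / mu, resp. eps / (mu chi)) shrinks by the
   factor 1 + eps sigma / Q(eps) at each acceptance, which gives the logarithmic
   bounds. *)

From HB Require Import structures.
From mathcomp Require Import all_boot all_order all_algebra.
From mathcomp Require Import all_classical all_reals.
From mathcomp Require Import ereal exp.
From mathcomp Require Import ring lra.
Import Order.TTheory GRing.Theory Num.Theory.
Local Open Scope classical_set_scope.
Local Open Scope ring_scope.

Section InnerProduct.
Context {R : realType} {n : nat}.
Local Notation V := 'rV[R]_n.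
Implicit Types (u v w : V) (a : R).

Lemma dotpC u v : dotp u v = dotp v u.
Proof. by apply: eq_bigr => i _; rewrite mulrC. Qed.

Lemma dotpDl u v w : dotp (u + v) w = dotp u w + dotp v w.
Proof. by rewrite /dotp -big_split; apply: eq_bigr => i _; rewrite !mxE mulrDl. Qed.

Lemma dotpZl a u w : dotp (a *: u) w = a * dotp u w.
Proof. by rewrite /dotp mulr_sumr; apply: eq_bigr => i _; rewrite !mxE mulrA. Qed.

Lemma dotpNl u w : dotp (- u) w = - dotp u w.
Proof. by rewrite -scaleN1r dotpZl mulN1r. Qed.

Lemma dotpBl u v w : dotp (u - v) w = dotp u w - dotp v w.
Proof. by rewrite dotpDl dotpNl. Qed.

Lemma dotpDr u v w : dotp w (u + v) = dotp w u + dotp w v.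
Proof. by rewrite dotpC dotpDl !(dotpC w). Qed.

Lemma dotpZr a u w : dotp w (a *: u) = a * dotp w u.
Proof. by rewrite dotpC dotpZl dotpC. Qed.

Lemma dotpNr u w : dotp w (- u) = - dotp w u.
Proof. by rewrite dotpC dotpNl dotpC. Qed.

Lemma dotpBr u v w : dotp w (u - v) = dotp w u - dotp w v.
Proof. by rewrite dotpDr dotpNr. Qed.

Lemma dotp0l w : dotp 0 w = 0.
Proof. by rewrite -(scale0r 0) dotpZl mul0r. Qed.

Lemma dotpp_ge0 u : 0 <= dotp u u.
Proof. by apply: sumr_ge0 => i _; rewrite -expr2 sqr_ge0. Qed.

Lemma dotpp_eq0 u : (dotp u u == 0) = (u == 0).
Proof.
apply/idP/eqP => [|->]; last by rewrite dotp0l.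
rewrite psumr_eq0 => [/allP u0|i _]; last by rewrite -expr2 sqr_ge0.
apply/rowP => i; rewrite mxE; apply/eqP.
by rewrite -sqrf_eq0 expr2; apply: implyP (u0 i (mem_index_enum _)) _.
Qed.

Lemma enorm_ge0 u : 0 <= enorm u.
Proof. exact: sqrtr_ge0. Qed.

Lemma enorm_sqr u : enorm u ^+ 2 = dotp u u.
Proof. by rewrite sqr_sqrtr // dotpp_ge0. Qed.

Lemma enormZ a u : enorm (a *: u) = `|a| * enorm u.
Proof. by rewrite /enorm dotpZl dotpZr mulrA -expr2 sqrtrM ?sqr_ge0 // sqrtr_sqr. Qed.

Lemma dotp_le_enorm u v : dotp u v <= enorm u * enorm v.
Proof.
have [->|u0] := eqVneq u 0; first by rewrite dotp0l mulr_ge0 ?enorm_ge0.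
have uu0 : 0 < dotp u u by rewrite lt0r dotpp_eq0 u0 dotpp_ge0.
(* [|<u,u> v - <u,v> u|^2 = <u,u> (<u,u><v,v> - <u,v>^2)] *)
have CS : dotp u v ^+ 2 <= dotp u u * dotp v v.
  have := dotpp_ge0 (dotp u u *: v - dotp u v *: u).
  rewrite !(dotpBl, dotpBr, dotpZl, dotpZr) (dotpC v u); nra.
rewrite /enorm -sqrtrM ?dotpp_ge0 //; apply: le_trans (ler_norm _) _.
by rewrite -sqrtr_sqr ler_sqrt // mulr_ge0 ?dotpp_ge0.
Qed.

Lemma enorm_combination_sqr u v (t : R) :
  enorm (t *: u + (1 - t) *: v) ^+ 2 =
  t * enorm u ^+ 2 + (1 - t) * enorm v ^+ 2 - t * (1 - t) * enorm (u - v) ^+ 2.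
Proof.
rewrite !enorm_sqr !(dotpDl, dotpDr, dotpNl, dotpNr, dotpZl, dotpZr) (dotpC v u).
ring.
Qed.

End InnerProduct.

Section RealFacts.
Context {R : realType}.
Implicit Types x y z q : R.

Lemma ler_addMt01 x y z : (forall t, 0 < t < 1 -> x <= y + t * z) -> x <= y.
Proof.
move=> bound; apply/ler_addgt0Pr => e e0.
have [z0|z0] := lerP z 0.
  by have := bound (1 / 2) ltac:(lra); lra.
pose t := Order.min (1 / 2) (e / z).
have t0 : 0 < t by rewrite lt_min; apply/andP; split; [lra | exact: divr_gt0].
have tz : t * z <= e by rewrite -ler_pdivlMr // ge_min lexx orbT.
have t1 : t < 1 by apply: le_lt_trans (_ : t <= 1 / 2) _; rewrite ?ge_min ?lexx //; lra.
by apply: le_trans (bound t _) _; [rewrite t0 t1 | rewrite lerD2l].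
Qed.

Lemma ler_addMinvn x y z : (forall N : nat, (0 < N)%N -> x <= y + z / N%:R) -> x <= y.
Proof.
move=> bound; apply/ler_addgt0Pr => e e0.
have [z0|z0] := lerP z 0.
  by have := bound 1%N isT; rewrite divr1; lra.
set N := (Num.truncn (z / e)).+1.
have zN : z / N%:R < e.
  by rewrite ltr_pdivrMr ?ltr0n // mulrC -ltr_pdivrMr // truncnS_gt.
by apply: le_trans (bound N isT) _; rewrite lerD2l ltW.
Qed.

Lemma ln1Dx_ge x : -1 < x -> x / (1 + x) <= ln (1 + x).
Proof.
move=> x1; have x10 : 0 < 1 + x by lra.
have lt1 : x / (1 + x) < 1 by rewrite ltr_pdivrMr // mul1r; lra.
have := @le_ln1Dx R (- (x / (1 + x))) ltac:(lra).
have -> : 1 + - (x / (1 + x)) = (1 + x)^-1 by field; rewrite gt_eqF.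
by rewrite lnV ?posrE //; lra.
Qed.

Lemma geometric_count_le (k : nat) q z :
  0 < q -> (1 + q) ^+ k <= z -> k%:R <= (1 + q^-1) * ln z.
Proof.
move=> q0 qkz; have q10 : 0 < 1 + q by lra.
have lnqk : k%:R * (q / (1 + q)) <= ln z.
  apply: le_trans (_ : ln ((1 + q) ^+ k) <= _); last first.
    by rewrite ler_ln ?posrE ?exprn_gt0 // (lt_le_trans _ qkz) ?exprn_gt0.
  rewrite lnXn // -[ln _ *+ k]mulr_natl; apply: ler_wpM2l; first exact: ler0n.
  by apply: ln1Dx_ge; lra.
have -> : k%:R = k%:R * (q / (1 + q)) * (1 + q^-1) by field; rewrite !gt_eqF.
by rewrite mulrC; apply: ler_wpM2l => //; rewrite addr_ge0 ?invr_ge0 ?ltW.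
Qed.

Lemma potential_step {lm e s K Q a b : R} :
  0 < Q -> 0 <= e -> e / Q <= lm -> 0 <= s -> 0 <= b -> s * K <= e ->
  lm * e + (1 + lm * s) * b < a -> (b + K) * (1 + e * s / Q) <= a + K.
Proof.
move=> Q0 e0 lmQ s0 b0 sK descent.
have qs : e * s / Q <= lm * s by rewrite mulrAC; apply: ler_wpM2r.
have qb : e * s / Q * b <= lm * s * b by apply: ler_wpM2r.
have qK : e * s / Q * K <= lm * e.
  have -> : e * s / Q * K = e / Q * (s * K) by ring.
  apply: le_trans (_ : e / Q * e <= _); last exact: ler_wpM2r.
  by apply: ler_wpM2l => //; rewrite divr_ge0 // ltW.
lra.
Qed.

Lemma young_gap_le {M L s e lm r g : R} :
  0 < s <= 1 -> 0 < e -> 0 < lm -> 0 <= L -> 0 <= r ->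
  4 * M ^+ 2 * lm + e * L * lm <= e * s ^+ 2 ->
  g <= 2 * M * r + L * r ^+ 2 / 2 -> g - s * r ^+ 2 / (2 * lm) <= s * e / 2.
Proof.
move=> /andP[s0 s1] e0 lm0 L0 r0 small gap.
rewrite -(ler_pM2l (_ : 0 < 2 * lm * (s * e))); last by rewrite !mulr_gt0.
(* Young: [4 M r s e <= s^2 e^2 + 4 M^2 r^2] *)
have young := mulr_ge0 (ltW lm0) (sqr_ge0 (s * e - 2 * M * r)).
have small_r := ler_wpM2r (sqr_ge0 r) small.
have s1L : 0 <= lm * L * r ^+ 2 * (e * (1 - s)).
  by rewrite !mulr_ge0 ?sqr_ge0 ?subr_ge0 // ltW.
have gap' := ler_wpM2l (ltW (mulr_gt0 (mulr_gt0 lm0 s0) e0)) gap.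
have -> : 2 * lm * (s * e) * (g - s * r ^+ 2 / (2 * lm)) =
          2 * (lm * s * e * g) - s ^+ 2 * e * r ^+ 2 by field; rewrite gt_eqF.
have -> : 2 * lm * (s * e) * (s * e / 2) = lm * (s * e) ^+ 2 by field.
nra.
Qed.

Lemma ln_rate_le {c m Q e d : R} : 0 < c <= 1 -> 0 < m -> 0 <= Q -> 0 < e -> 0 <= d ->
  (1 + Q / (e * (m * c))) * ln (1 + d / (e / (m * c)))
  <= c^-1 * (1 + Q / (m * e)) * ln (1 + m * d / e).
Proof.
move=> /andP[c0 c1] m0 Q0 e0 d0.
have md0 : 0 <= m * d / e by rewrite divr_ge0 ?mulr_ge0 // ltW.
have -> : d / (e / (m * c)) = c * (m * d / e) by field; rewrite !gt_eqF.
have -> : c^-1 * (1 + Q / (m * e)) = c^-1 + Q / (e * (m * c)) by field; rewrite !gt_eqF.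
apply: ler_pM.
- by rewrite addr_ge0 // divr_ge0 // !mulr_ge0 // ltW.
- by rewrite ln_ge0 // lerDl mulr_ge0 // ltW.
- by rewrite lerD2r invf_ge1.
have cmd0 : 0 <= c * (m * d / e) by rewrite mulr_ge0 // ltW.
by rewrite ler_ln ?posrE ?ltr_wpDr // lerD2l ler_piMl // ltW.
Qed.

End RealFacts.

Section IterationBound.
Context {R : realType}.
Local Open Scope ereal_scope.

Lemma invE_ge0 (x : R) : (0 <= x)%R -> 0 <= invE x.
Proof. by rewrite /invE; case: eqP => _ x0; rewrite ?leey // lee_fin invr_ge0. Qed.

Lemma le_invE_mul (x a L A : R) : (0 <= x)%R -> (0 < a)%R -> (0 < L)%R ->
  ((0 < x)%R -> (A <= x^-1 * a * L)%R) -> A%:E <= invE x * a%:E * L%:E.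
Proof.
move=> x0 a0 L0 bound; rewrite /invE; case: eqP => [_|/eqP x_neq0].
  by rewrite gt0_mulye ?lte_fin // gt0_mulye ?lte_fin ?leey.
by rewrite -!EFinM lee_fin bound // lt0r x_neq0.
Qed.

Lemma le_add_invE_mul (x Q L A : R) : (0 <= x)%R -> (0 < Q)%R -> (0 < L)%R ->
  ((0 < x)%R -> (A <= (1 + Q * x^-1) * L)%R) -> A%:E <= (1 + Q%:E * invE x) * L%:E.
Proof.
move=> x0 Q0 L0 bound; rewrite /invE; case: eqP => [_|/eqP x_neq0].
  by rewrite gt0_muley ?lte_fin // addey // gt0_mulye ?lte_fin ?leey.
by rewrite -EFinM lee_fin bound // lt0r x_neq0.
Qed.

Lemma le_ucs_bound (A B : nat) (mu nu Q d0 chi lam0 eps : R) :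
  (0 < eps)%R -> (0 < Q)%R -> (0 <= chi)%R -> (0 <= mu)%R -> (0 <= nu)%R ->
  (B%:R <= 2 * ln (lam0 * Q / eps))%R ->
  (A%:R <= d0 ^+ 2 * Q / eps ^+ 2)%R ->
  ((0 < mu)%R -> (0 < nu)%R ->
     A%:R <= (1 + Q * (nu * eps)^-1) * ln (1 + mu * d0 ^+ 2 / eps))%R ->
  ((0 < mu)%R -> (0 < chi)%R ->
     A%:R <= chi^-1 * (1 + Q / (mu * eps)) * ln (1 + mu * d0 ^+ 2 / eps))%R ->
  (A + B)%:R%:E <= ucs_bound mu nu Q d0 chi lam0 eps.
Proof.
move=> eps0 Q0 chi0 mu0 nu0 B_le A_le A_le_nu A_le_chi.
rewrite natrD EFinD /ucs_bound /=; apply: leeD; last first.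
  by rewrite lee_fin (le_trans B_le) // ceil_ge.
case: eqP => [_|/eqP mu_neq0]; first by rewrite lee_fin.
have mu_gt0 : (0 < mu)%R by rewrite lt0r mu_neq0.
rewrite le_min lee_fin A_le andbT.
set L := ln (1 + mu * d0 ^+ 2 / eps).
have a_gt0 : (0 < 1 + Q / (mu * eps))%R by rewrite addr_gt0 // divr_gt0 // mulr_gt0.
(* for [A = 0] the logarithm may vanish, and [+oo * 0 = 0] *)
have [A0|A_gt0] := eqVneq A 0%N.
  have L0 : (0 <= L)%R.
    apply: ln_ge0; rewrite lerDl; apply: divr_ge0; last exact: ltW.
    by rewrite mulr_ge0 ?sqr_ge0.
  rewrite A0 mule_ge0 ?lee_fin // le_min; apply/andP; split.
    by rewrite mule_ge0 ?invE_ge0 // lee_fin ltW.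
  have [eps_ge0 Q_ge0] := (ltW eps0, ltW Q0).
  by rewrite adde_ge0 ?lee_fin // mule_ge0 ?invE_ge0 ?mulr_ge0 ?lee_fin.
have L_gt0 : (0 < L)%R.
  have : (0 < d0 ^+ 2 * Q / eps ^+ 2)%R by rewrite (lt_le_trans _ A_le) // ltr0n lt0n.
  rewrite pmulr_lgt0 ?invr_gt0 ?exprn_gt0 // pmulr_lgt0 // => d0_gt0.
  by apply: ln_gt0; rewrite ltrDl divr_gt0 // mulr_gt0.
rewrite minEle; case: ifP => _; first exact: le_invE_mul (A_le_chi mu_gt0).
apply: le_add_invE_mul => //; first by rewrite mulr_ge0 // ltW.
by move=> nu_eps0; apply: A_le_nu; rewrite // -(pmulr_lgt0 _ eps0).
Qed.

Lemma ucs_bound_le_fin (mu nu Q d0 chi lam0 eps : R) :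
  ucs_bound mu nu Q d0 chi lam0 eps
  <= (d0 ^+ 2 * Q / eps ^+ 2 + (Num.ceil (2 * ln (lam0 * Q / eps)))%:~R)%:E.
Proof.
rewrite /ucs_bound /= (EFinD (d0 ^+ 2 * Q / eps ^+ 2)); apply: leeD => //.
by case: eqP => _ //; rewrite ge_min lexx orbT.
Qed.

Lemma exists_first_le (P : nat -> Prop) (b : \bar R) (M : R) : b <= M%:E ->
  (forall j, (forall i, (i < j)%N -> ~ P i) -> j%:R%:E <= b) ->
  exists j, j%:R%:E <= b /\ P j.
Proof.
move=> bM bound.
have [[j Pj]|noP] := pselect (exists j, P j); last first.
  have := bound (Num.truncn M).+1 (fun i _ Pi => noP (ex_intro _ i Pi)).
  by move=> /le_trans /(_ bM); rewrite lee_fin leNgt truncnS_gt.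
have exP : exists j, `[< P j >] by exists j; apply/asboolP.
case: (ex_minnP exP) => m /asboolP Pm m_min.
exists m; split => //; apply: bound => i im Pi.
by have := m_min i (asboolT Pi); rewrite leqNgt im.
Qed.

End IterationBound.

Section StrongConvexity.
Context {R : realType} {n : nat}.
Local Notation V := 'rV[R]_n.
Local Open Scope ereal_scope.
Implicit Types (psi : V -> \bar R) (x y : V).

Lemma EFin_fine {e : \bar R} : -oo < e -> e < +oo -> e = (fine e)%:E.
Proof. by move=> eNy eoo; rewrite fineK // fin_numE -ltNye -ltey eNy eoo. Qed.

Lemma convex_strongly_convex0 {psi} : convex_fun psi -> strongly_convex_mod psi 0.
Proof. by move=> cvx x y t t01; rewrite !mul0r !sube0; exact: cvx. Qed.

Lemma strongly_convex_fine {psi} {m t : R} {x y} :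
  (forall z, -oo < psi z) -> strongly_convex_mod psi m -> (0 < t < 1)%R ->
  psi x < +oo -> psi y < +oo ->
  let z := (t *: x + (1 - t) *: y)%R in
  psi z < +oo /\
  (fine (psi z) <= t * fine (psi x) + (1 - t) * fine (psi y)
                   - m / 2 * (t * (1 - t)) * enorm (x - y) ^+ 2)%R.
Proof.
move=> psiNy scm t01 xoo yoo z.
have := scm x y t t01.
rewrite (EFin_fine (psiNy x) xoo) (EFin_fine (psiNy y) yoo) -/z.
have := psiNy z; case: (psi z) => [r| |] //= _.
rewrite -!EFinB -!EFinM -EFinD lee_fin => ineq; split; first exact: ltry.
by move: ineq; rewrite /z enorm_combination_sqr; lra.
Qed.

Lemma convex_combination_pinfty (a b : \bar R) (t : R) : (0 < t < 1)%R ->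
  -oo < a -> -oo < b -> a = +oo \/ b = +oo -> t%:E * a + (1 - t)%:E * b = +oo.
Proof.
move=> /andP[t0 t1] aNy bNy [->|->].
  rewrite gt0_muley ?lte_fin // addye //.
  by move: bNy; case: b => [r| |] //= _; rewrite gt0_muley ?lte_fin ?subr_gt0.
rewrite (gt0_muley (x := (1 - t)%:E)) ?lte_fin ?subr_gt0 // addey //.
by move: aNy; case: a => [r| |] //= _; rewrite gt0_muley ?lte_fin.
Qed.

End StrongConvexity.

Section DistanceToMinimizers.
Context {R : realType} {n : nat}.
Variables (psi : 'rV[R]_n -> \bar R) (x0 : 'rV[R]_n).
Hypothesis Xstar_neq0 : Xstar psi !=set0.

Lemma dist0_ge0 : 0 <= dist0 psi x0.
Proof.
have [y Xy] := Xstar_neq0; apply: lb_le_inf; first by exists (enorm (y - x0)), y.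
by move=> _ [x _ <-]; exact: enorm_ge0.
Qed.

Lemma le_dist0_sqr (v : R) :
  (forall xs, Xstar psi xs -> v <= enorm (xs - x0) ^+ 2) -> v <= dist0 psi x0 ^+ 2.
Proof.
move=> v_le; have [v0|v_gt0] := lerP v 0; first exact: le_trans v0 (sqr_ge0 _).
have [y Xy] := Xstar_neq0.
rewrite -(sqr_sqrtr (ltW v_gt0)) lerXn2r ?nnegrE ?sqrtr_ge0 ?dist0_ge0 //.
apply: lb_le_inf; first by exists (enorm (y - x0)), y.
move=> _ [x Xx <-].
by rewrite -(ger0_norm (enorm_ge0 (x - x0))) -sqrtr_sqr ler_sqrt ?sqr_ge0 // v_le.
Qed.

End DistanceToMinimizers.

Section Ucs.
Context {R : realType} {n : nat}.
Local Notation V := 'rV[R]_n.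
Context {f h : V -> \bar R} {f' : V -> V} {Mf Lf chi eps nu mu : R}.
Local Notation phi := (phi_of f h).
Local Notation D := (dom h).

Hypotheses (fNy : forall x, (-oo < f x)%E) (hNy : forall x, (-oo < h x)%E).
Hypotheses (f_convex : convex_fun f) (h_convex : convex_fun h).
Hypotheses (h_sc : strongly_convex_mod h nu) (nu_ge0 : 0 <= nu).
Hypothesis phi_sc : strongly_convex_mod phi mu.
Hypotheses (chi_ge0 : 0 <= chi) (chi_lt1 : chi < 1) (eps_gt0 : 0 < eps).
Hypothesis dom_hf : D `<=` dom f.
Hypothesis f'_subgrad : forall x, x \in D -> is_subgrad f x (f' x).
Hypotheses (Mf_ge0 : 0 <= Mf) (Lf_ge0 : 0 <= Lf).
Hypothesis f'_growth : forall x y, x \in D -> y \in D ->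
  enorm (f' x - f' y) <= 2 * Mf + Lf * enorm (x - y).

Definition fr (x : V) : R := fine (f x).
Definition hr (x : V) : R := fine (h x).
Definition phir (x : V) : R := fr x + hr x.
Definition subprobr (lm : R) (c u : V) : R :=
  fr c + dotp (f' c) (u - c) + hr u + (2 * lm)^-1 * enorm (u - c) ^+ 2.

Lemma memD x : (x \in D) = (h x < +oo)%E.
Proof. by apply/idP/idP => [/set_mem|/mem_set]. Qed.

Lemma hE {x} : x \in D -> h x = (hr x)%:E.
Proof. by rewrite memD; exact: EFin_fine. Qed.

Lemma fE {x} : x \in D -> f x = (fr x)%:E.
Proof. by move=> /set_mem /dom_hf; exact: EFin_fine. Qed.

Lemma phiE {x} : x \in D -> phi x = (phir x)%:E.
Proof. by move=> xD; rewrite /phi_of fE // hE. Qed.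

Lemma subprobE (lm : R) c u : c \in D -> u \in D ->
  subprob f h f' lm c u = (subprobr lm c u)%:E.
Proof. by move=> cD uD; rewrite /subprob /ell fE // hE. Qed.

Lemma accept_testE (lm : R) c x : c \in D -> x \in D ->
  accept_test f f' chi eps lm c x <->
  fr x - (fr c + dotp (f' c) (x - c)) - (1 - chi) * enorm (x - c) ^+ 2 / (2 * lm)
    <= (1 - chi) * eps / 2.
Proof. by move=> cD xD; rewrite /accept_test /ell fE // fE // lee_fin. Qed.

Lemma dom_convex {x y} {t : R} : x \in D -> y \in D -> 0 < t < 1 ->
  t *: x + (1 - t) *: y \in D.
Proof.
rewrite !memD => xD yD t01.
by have [] := strongly_convex_fine hNy (convex_strongly_convex0 h_convex) t01 xD yD.
Qed.

Lemma dom_segment {c x} {t : R} : c \in D -> x \in D -> 0 <= t <= 1 ->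
  c + t *: (x - c) \in D.
Proof.
move=> cD xD /andP[t0 t1].
have [->|t_neq0] := eqVneq t 0; first by rewrite scale0r addr0.
have [->|t_neq1] := eqVneq t 1; first by rewrite scale1r addrC subrK.
have -> : c + t *: (x - c) = t *: x + (1 - t) *: c.
  by rewrite scalerBr scalerBl scale1r addrCA addrA.
by apply: dom_convex; rewrite // !lt_neqAle eq_sym t_neq0 t_neq1 t0 t1.
Qed.

Lemma subgrad_le {x u} : x \in D -> u \in D -> fr x + dotp (f' x) (u - x) <= fr u.
Proof. by move=> xD uD; have := f'_subgrad x xD u; rewrite fE // fE // lee_fin. Qed.

Lemma argmin_dom {lm : R} {c x} : c \in D -> is_argmin (subprob f h f' lm c) x ->
  x \in D.
Proof.
move=> cD xmin; have := xmin c.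
rewrite (subprobE lm c c cD cD) memD /subprob /ell fE //.
by have := hNy x; case: (h x).
Qed.

Lemma subprobr_convex c {lm : R} {u x} {t : R} :
  0 < lm -> u \in D -> x \in D -> 0 < t < 1 ->
  subprobr lm c (t *: u + (1 - t) *: x) <=
  t * subprobr lm c u + (1 - t) * subprobr lm c x
  - (nu / 2 + (2 * lm)^-1) * (t * (1 - t)) * enorm (u - x) ^+ 2.
Proof.
move=> lm0 uD xD t01.
have [_ hz] := strongly_convex_fine hNy h_sc t01 (set_mem uD) (set_mem xD).
rewrite /subprobr /hr.
have -> : t *: u + (1 - t) *: x - c = t *: (u - c) + (1 - t) *: (x - c).
  by apply/rowP => i; rewrite !mxE; ring.
have ux : u - x = (u - c) - (x - c) by rewrite opprB addrA subrK.
rewrite ux in hz *.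
rewrite (dotpDr (t *: _)) !dotpZr enorm_combination_sqr.
move: hz; lra.
Qed.

Lemma prox_three_point {lm : R} {c x u} : 0 < lm -> c \in D ->
  is_argmin (subprob f h f' lm c) x -> u \in D ->
  subprobr lm c x + (nu / 2 + (2 * lm)^-1) * enorm (u - x) ^+ 2 <= subprobr lm c u.
Proof.
move=> lm0 cD xmin uD; have xD := argmin_dom cD xmin.
apply: (ler_addMt01 _ _ ((nu / 2 + (2 * lm)^-1) * enorm (u - x) ^+ 2)) => t t01.
have zD := dom_convex uD xD t01.
have := xmin (t *: u + (1 - t) *: x); rewrite !subprobE // lee_fin => xz.
have := subprobr_convex c lm0 uD xD t01.
case/andP: t01 => t0 t1; nra.
Qed.

Lemma linearization_gap_segment {c x} (t t' : R) : c \in D -> x \in D ->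
  0 <= t' <= t -> t <= 1 ->
  fr (c + t *: (x - c)) - fr (c + t' *: (x - c)) - (t - t') * dotp (f' c) (x - c)
  <= (t - t') * (2 * Mf + Lf * t * enorm (x - c)) * enorm (x - c).
Proof.
move=> cD xD /andP[t'0 t't] t1.
have pD : c + t *: (x - c) \in D by apply: dom_segment; rewrite // (le_trans t'0 t't).
have p'D : c + t' *: (x - c) \in D by apply: dom_segment; rewrite // t'0 (le_trans t't t1).
have sg := subgrad_le pD p'D.
have step : c + t' *: (x - c) - (c + t *: (x - c)) = (t' - t) *: (x - c).
  by apply/rowP => i; rewrite !mxE; ring.
rewrite step dotpZr in sg.
have growth : enorm (f' (c + t *: (x - c)) - f' c) <= 2 * Mf + Lf * t * enorm (x - c).
  have := f'_growth _ _ pD cD; rewrite addrAC subrr add0r enormZ ger0_norm ?mulrA //.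
  exact: le_trans t'0 t't.
have cs := dotp_le_enorm (f' (c + t *: (x - c)) - f' c) (x - c).
rewrite dotpBl in cs.
have tt'0 : 0 <= t - t' by rewrite subr_ge0.
have := ler_wpM2l tt'0 (le_trans cs (ler_wpM2r (enorm_ge0 _) growth)).
lra.
Qed.

Lemma linearization_gap_grid {c x} (s : R) (k : nat) : c \in D -> x \in D ->
  0 < s -> k%:R * s <= 1 ->
  fr (c + (k%:R * s) *: (x - c)) - fr c - k%:R * s * dotp (f' c) (x - c)
  <= k%:R * s * (2 * Mf * enorm (x - c))
     + Lf * enorm (x - c) ^+ 2 * (k%:R * (k%:R + 1) / 2) * s ^+ 2.
Proof.
move=> cD xD s0; elim: k => [_|k IH ks1].
  by rewrite mulr0n mul0r scale0r addr0; lra.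
have ks : k%:R * s <= k.+1%:R * s by rewrite ler_pM2r // ler_nat.
have ks0 : 0 <= k%:R * s <= k.+1%:R * s by rewrite ks mulr_ge0 ?ler0n ?ltW.
have := linearization_gap_segment _ _ cD xD ks0 ks1.
have := IH (le_trans ks ks1).
rewrite -[k.+1%:R]natr1; lra.
Qed.

Lemma linearization_gap_le {c x} : c \in D -> x \in D ->
  fr x - fr c - dotp (f' c) (x - c)
  <= 2 * Mf * enorm (x - c) + Lf * enorm (x - c) ^+ 2 / 2.
Proof.
move=> cD xD; set r := enorm (x - c).
apply: (ler_addMinvn _ _ (Lf * r ^+ 2 / 2)) => N N0.
have N_neq0 : N%:R != 0 :> R by rewrite pnatr_eq0 -lt0n.
have NN : N%:R * N%:R^-1 = 1 :> R by rewrite mulfV.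
have := linearization_gap_grid N%:R^-1 N cD xD.
rewrite invr_gt0 ltr0n NN scale1r subrKC lexx => /(_ N0 isT).
have -> : Lf * r ^+ 2 * (N%:R * (N%:R + 1) / 2) * N%:R^-1 ^+ 2
          = Lf * r ^+ 2 / 2 + Lf * r ^+ 2 / 2 / N%:R by field.
rewrite -/r; lra.
Qed.

Lemma accept_test_of_small_step (lm : R) c x : 0 < lm -> c \in D -> x \in D ->
  4 * Mf ^+ 2 * lm + eps * Lf * lm <= eps * (1 - chi) ^+ 2 ->
  accept_test f f' chi eps lm c x.
Proof.
move=> lm0 cD xD small; apply/accept_testE => //.
have s01 : 0 < 1 - chi <= 1 by rewrite subr_gt0 chi_lt1 gerBl.
have gap := linearization_gap_le cD xD.
have := young_gap_le s01 eps_gt0 lm0 Lf_ge0 (enorm_ge0 _) small gap; lra.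
Qed.

Lemma phiNy x : (-oo < phi x)%E.
Proof.
rewrite /phi_of; move: (fNy x) (hNy x).
by case: (f x) => [a| |] //; case: (h x) => [b| |] //= _ _; rewrite ltNyr.
Qed.

Lemma Xstar_dom {xs y} : Xstar phi xs -> y \in D -> xs \in D.
Proof.
move=> xsX yD; have := xsX y; rewrite (phiE yD) memD /phi_of.
move: (fNy xs); case: (h xs) => [b| |] //; first by rewrite ltry.
by case: (f xs).
Qed.

Lemma phi_lt_pinfty {x} : x \in D -> (phi x < +oo)%E.
Proof. by move=> xD; rewrite phiE // ltry. Qed.

Lemma phistar_Xstar {xs} : Xstar phi xs -> phistar phi = phi xs.
Proof.
move=> xsX; apply/le_anti/andP; split; first by apply: ereal_inf_lbound; exists xs.
by apply: le_ereal_inf_tmp => _ [y _ <-]; exact: xsX.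
Qed.

Lemma stop_testE {x xs} : x \in D -> Xstar phi xs ->
  stop_test phi eps x <-> phir x - phir xs <= eps.
Proof.
move=> xD xsX; have xsD := Xstar_dom xsX xD.
by rewrite /stop_test (phistar_Xstar xsX) phiE // phiE // lee_fin.
Qed.

Lemma accepted_prox_ineq {lm : R} {c x u} : 0 < lm -> c \in D ->
  is_argmin (subprob f h f' lm c) x -> accept_test f f' chi eps lm c x -> u \in D ->
  phir x + chi * enorm (x - c) ^+ 2 / (2 * lm) - (1 - chi) * eps / 2
    + (nu / 2 + (2 * lm)^-1) * enorm (u - x) ^+ 2
  <= phir u + (2 * lm)^-1 * enorm (u - c) ^+ 2.
Proof.
move=> lm0 cD xmin acc uD; have xD := argmin_dom cD xmin.
have {}acc := (accept_testE lm c x cD xD).1 acc.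
have := prox_three_point lm0 cD xmin uD; have := subgrad_le cD uD.
rewrite /subprobr /phir; lra.
Qed.

Definition contracts_at (sigma : R) : Prop :=
  forall (lm : R) c x xs, 0 < lm -> c \in D -> is_argmin (subprob f h f' lm c) x ->
    accept_test f f' chi eps lm c x -> ~ stop_test phi eps x -> Xstar phi xs ->
    lm * eps + (1 + lm * sigma) * enorm (xs - x) ^+ 2 < enorm (xs - c) ^+ 2.

Lemma contracts_at_scaled sigma :
  (forall (lm : R) c x xs, 0 < lm -> c \in D -> is_argmin (subprob f h f' lm c) x ->
    accept_test f f' chi eps lm c x -> xs \in D -> eps < phir x - phir xs ->
    eps / 2 + ((2 * lm)^-1 + sigma / 2) * enorm (xs - x) ^+ 2
      < (2 * lm)^-1 * enorm (xs - c) ^+ 2) ->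
  contracts_at sigma.
Proof.
move=> scaled lm c x xs lm0 cD xmin acc nstop xsX.
have xD := argmin_dom cD xmin; have xsD := Xstar_dom xsX cD.
have gap : eps < phir x - phir xs.
  by rewrite ltNge; apply/negP => /(stop_testE xD xsX).
have K0 : 0 < (2 * lm)^-1 by rewrite invr_gt0 mulr_gt0.
rewrite -(ltr_pM2l K0) mulrDr.
have -> : (2 * lm)^-1 * (lm * eps) = eps / 2 by field; rewrite gt_eqF.
have -> : (2 * lm)^-1 * ((1 + lm * sigma) * enorm (xs - x) ^+ 2)
          = ((2 * lm)^-1 + sigma / 2) * enorm (xs - x) ^+ 2 by field; rewrite gt_eqF.
exact: scaled.
Qed.

Lemma contracts_at_nu : contracts_at nu.
Proof.
apply: contracts_at_scaled => lm c x xs lm0 cD xmin acc xsD gap.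
have := accepted_prox_ineq lm0 cD xmin acc xsD.
have K0 : 0 <= (2 * lm)^-1 by rewrite invr_ge0 mulr_ge0 // ltW.
have := mulr_ge0 (mulr_ge0 chi_ge0 (sqr_ge0 (enorm (x - c)))) K0.
have := mulr_ge0 chi_ge0 (ltW eps_gt0).
lra.
Qed.

Lemma contracts_at_mu_chi : 0 < chi -> contracts_at (mu * chi).
Proof.
move=> chi_gt0; apply: contracts_at_scaled => lm c x xs lm0 cD xmin acc xsD gap.
have xD := argmin_dom cD xmin.
have t01 : 0 < 1 - chi < 1 by rewrite subr_gt0 chi_lt1 ltrBlDr ltrDl chi_gt0.
set z := (1 - chi) *: xs + (1 - (1 - chi)) *: x.
have zD : z \in D := dom_convex xsD xD t01.
have [_] := strongly_convex_fine phiNy phi_sc t01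
  (phi_lt_pinfty xsD) (phi_lt_pinfty xD).
rewrite -/z !phiE //= => phiz.
have := accepted_prox_ineq lm0 cD xmin acc zD.
have -> : z - x = (1 - chi) *: (xs - x) by apply/rowP => i; rewrite !mxE; ring.
have -> : z - c = (1 - chi) *: (xs - c) + (1 - (1 - chi)) *: (x - c).
  by apply/rowP => i; rewrite !mxE; ring.
have xs_x : xs - c - (x - c) = xs - x by rewrite opprB addrA subrK.
rewrite enormZ enorm_combination_sqr xs_x exprMn (real_normK (num_real _)) => prox.
have t0 : 0 < 1 - chi by rewrite subr_gt0.
have tgap : (1 - chi) * eps < (1 - chi) * (phir x - phir xs) by rewrite ltr_pM2l.
have nub := mulr_ge0 (mulr_ge0 (divr_ge0 nu_ge0 (ler0n _ 2)) (sqr_ge0 (1 - chi)))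
                     (sqr_ge0 (enorm (xs - x))).
rewrite -(ltr_pM2l t0).
lra.
Qed.

Lemma phi_notin_dom x : x \notin D -> phi x = +oo%E.
Proof.
rewrite memD -leNgt leye_eq => /eqP hx.
by rewrite /phi_of hx addey // gt_eqF.
Qed.

Lemma phi_strongly_convex_nu : strongly_convex_mod phi nu.
Proof.
move=> x y t t01.
have sqNy w : (-oo < phi w - (nu / 2 * enorm w ^+ 2)%:E)%E.
  by move: (phiNy w); case: (phi w) => [r| |] //= _; rewrite ltNyr.
have [xD|/phi_notin_dom phix] := boolP (x \in D); last first.
  by rewrite convex_combination_pinfty ?leey // phix; left.
have [yD|/phi_notin_dom phiy] := boolP (y \in D); last first.
  by rewrite convex_combination_pinfty ?leey // phiy; right.
have zD := dom_convex xD yD t01.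
rewrite !phiE // -!EFinB -!EFinM -EFinD lee_fin.
have [_] := strongly_convex_fine hNy h_sc t01 (set_mem xD) (set_mem yD).
have [_] := strongly_convex_fine fNy (convex_strongly_convex0 f_convex) t01
  (dom_hf _ (set_mem xD)) (dom_hf _ (set_mem yD)).
rewrite /phir /fr /hr enorm_combination_sqr; lra.
Qed.

Section Run.
Variables (x0 : V) (lam0 : R) (lam : nat -> R) (ctr xq : nat -> V).
Hypotheses (run : UCS_run f h f' x0 chi lam0 eps lam ctr xq) (lam0_gt0 : 0 < lam0).
Hypotheses (x0_dom : x0 \in D) (Xstar_neq0 : Xstar phi !=set0).
Local Notation Q := (Qe Mf Lf chi lam0 eps).
Local Notation d0 := (dist0 phi x0).

Definition running (j : nat) : Prop := forall i, (i < j)%N -> ~ stop_test phi eps (xq i).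

Definition accepted (i : nat) : bool :=
  `[< accept_test f f' chi eps (lam i) (ctr i) (xq i) >].

Definition nacc (j : nat) : nat := \sum_(i < j) accepted i.
Definition nrej (j : nat) : nat := \sum_(i < j) ~~ accepted i.

Lemma nacc_add_nrej j : (nacc j + nrej j)%N = j.
Proof.
rewrite /nacc /nrej -big_split /= -[RHS]card_ord -sum1_card.
by apply: eq_bigr => i _; case: accepted.
Qed.

Lemma running_prev {j} : running j.+1 -> running j.
Proof. by move=> runj i ij; apply: runj; rewrite ltnS ltnW. Qed.

Lemma running_step {j} : running j.+1 ->
  (accepted j -> lam j.+1 = lam j /\ ctr j.+1 = xq j) /\
  (~~ accepted j -> lam j.+1 = lam j / 2 /\ ctr j.+1 = ctr j).
Proof.
move=> runj; case: run => _ _ _ /(_ j (runj j (ltnSn j))) [acc rej].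
by split=> [/asboolP|/asboolPn]; [exact: acc | exact: rej].
Qed.

Lemma ctr_dom {j} : running j -> ctr j \in D.
Proof.
elim: j => [_|j IH runj]; first by case: run => _ -> _ _.
have cD := IH (running_prev runj); have [acc rej] := running_step runj.
case: (boolP (accepted j)) => [/acc|/rej] [_ ->] //.
by case: run => _ _ xmin _; exact: argmin_dom cD (xmin j).
Qed.

Let chi_sqr_gt0 : 0 < (1 - chi) ^+ 2. Proof. by rewrite exprn_gt0 // subr_gt0. Qed.

Let Qe_rest_ge0 : 0 <= (8 * Mf ^+ 2 + 2 * eps * Lf) / (1 - chi) ^+ 2.
Proof.
apply: divr_ge0; last exact: sqr_ge0.
by rewrite addr_ge0 ?mulr_ge0 ?sqr_ge0 // ltW.
Qed.

Lemma QeE : Q = eps / lam0 + (8 * Mf ^+ 2 + 2 * eps * Lf) / (1 - chi) ^+ 2.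
Proof. by rewrite /Qe; field; rewrite !gt_eqF ?subr_gt0. Qed.

Lemma Qe_gt0 : 0 < Q.
Proof. by rewrite QeE (ltr_wpDr Qe_rest_ge0) // divr_gt0. Qed.

Lemma eps_div_Qe_le_lam0 : eps / Q <= lam0.
Proof.
rewrite ler_pdivrMr ?Qe_gt0 // QeE mulrDr mulrCA divff ?gt_eqF // mulr1.
by rewrite lerDl (mulr_ge0 (ltW lam0_gt0) Qe_rest_ge0).
Qed.

Lemma accept_test_of_lam_Qe_le (lm : R) c x : 0 < lm -> c \in D -> x \in D ->
  lm * Q <= 2 * eps -> accept_test f f' chi eps lm c x.
Proof.
move=> lm0 cD xD lmQ; apply: accept_test_of_small_step => //.
have : lm * ((8 * Mf ^+ 2 + 2 * eps * Lf) / (1 - chi) ^+ 2) <= 2 * eps.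
  by apply: le_trans lmQ; rewrite ler_pM2l // QeE lerDr divr_ge0 // ltW.
rewrite mulrA (ler_pdivrMr _ _ chi_sqr_gt0); lra.
Qed.

Lemma xq_dom {j} : running j -> xq j \in D.
Proof.
by move=> runj; case: run => _ _ xmin _; exact: argmin_dom (ctr_dom runj) (xmin j).
Qed.

Lemma lam_ge {j} : running j -> eps / Q <= lam j.
Proof.
elim: j => [_|j IH runj]; first by case: run => -> _ _ _; exact: eps_div_Qe_le_lam0.
have runj' := running_prev runj; have lamj := IH runj'.
have [acc rej] := running_step runj.
case: (boolP (accepted j)) => [/acc [-> _] //|aj]; have [-> _] := rej aj.
have lamj0 : 0 < lam j := lt_le_trans (divr_gt0 eps_gt0 Qe_gt0) lamj.
have : 2 * eps < lam j * Q.
  rewrite ltNge; apply: contra aj => small; apply/asboolP.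
  exact: accept_test_of_lam_Qe_le lamj0 (ctr_dom runj') (xq_dom runj') small.
by rewrite ler_pdivrMr ?Qe_gt0 //; lra.
Qed.

Lemma lam_gt0 {j} : running j -> 0 < lam j.
Proof. by move/lam_ge; apply: lt_le_trans; rewrite divr_gt0 ?Qe_gt0. Qed.

Lemma nacc_S j : nacc j.+1 = (nacc j + accepted j)%N.
Proof. by rewrite /nacc big_ord_recr. Qed.

Lemma nrej_S j : nrej j.+1 = (nrej j + ~~ accepted j)%N.
Proof. by rewrite /nrej big_ord_recr. Qed.

Lemma lam_expn_nrej {j} : running j -> lam j * 2 ^+ nrej j = lam0.
Proof.
elim: j => [_|j IH runj]; first by case: run => -> _ _ _; rewrite /nrej big_ord0 mulr1.
have [acc rej] := running_step runj; rewrite nrej_S.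
case: (boolP (accepted j)) => [/acc [-> _]|/rej [-> _]]; rewrite ?addn0 ?addn1.
  exact: IH (running_prev runj).
by rewrite exprS mulrA divfK ?pnatr_eq0 // IH //; exact: running_prev.
Qed.

Lemma nrej_le {j} : running j -> (nrej j)%:R <= 2 * ln (lam0 * Q / eps).
Proof.
move=> runj; have lamj0 := lam_gt0 runj.
have := geometric_count_le (nrej j) 1 (lam0 * Q / eps) ltr01.
rewrite invr1 (_ : 1 + 1 = 2) //; apply; apply: le_trans (_ : lam0 / lam j <= _).
  by rewrite -(lam_expn_nrej runj) mulrAC divff ?gt_eqF ?mul1r.
rewrite -mulrA ler_pM2l // -invf_div lef_pV2 ?posrE ?divr_gt0 ?Qe_gt0 //.
exact: lam_ge.
Qed.

Lemma running_contracts {j sigma xs} : contracts_at sigma -> running j.+1 ->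
  accepted j -> Xstar phi xs ->
  lam j * eps + (1 + lam j * sigma) * enorm (xs - ctr j.+1) ^+ 2
    < enorm (xs - ctr j) ^+ 2.
Proof.
move=> contr runj aj xsX; have runj' := running_prev runj.
have [acc _] := running_step runj; have [_ ->] := acc aj.
case: run => _ _ xmin _.
apply: contr (lam_gt0 runj') (ctr_dom runj') (xmin j) _ (runj j (ltnSn j)) xsX.
exact/asboolP.
Qed.

Lemma sqr_dist_nacc_le {j xs} : running j -> Xstar phi xs ->
  enorm (xs - ctr j) ^+ 2 + (nacc j)%:R * (eps ^+ 2 / Q) <= enorm (xs - x0) ^+ 2.
Proof.
move=> + xsX; elim: j => [_|j IH runj].
  by case: run => _ -> _ _; rewrite /nacc big_ord0 mul0r addr0.
have runj' := running_prev runj; have {IH} := IH runj'.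
have [acc rej] := running_step runj; rewrite nacc_S.
case: (boolP (accepted j)) => [aj|/rej [_ ->]]; last by rewrite addn0.
have := running_contracts contracts_at_nu runj aj xsX.
have : eps ^+ 2 / Q <= lam j * eps.
  by rewrite expr2 mulrAC ler_pM2r // lam_ge.
have := mulr_ge0 (mulr_ge0 (ltW (lam_gt0 runj')) nu_ge0)
                 (sqr_ge0 (enorm (xs - ctr j.+1))).
rewrite /= addn1 -natr1; lra.
Qed.

Lemma potential_nacc_le {j} {sigma K : R} {xs} : 0 <= sigma -> sigma * K <= eps ->
  contracts_at sigma -> running j -> Xstar phi xs ->
  (enorm (xs - ctr j) ^+ 2 + K) * (1 + eps * sigma / Q) ^+ nacc j
    <= enorm (xs - x0) ^+ 2 + K.
Proof.
move=> sigma0 sK contr + xsX; elim: j => [_|j IH runj].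
  by case: run => _ -> _ _; rewrite /nacc big_ord0 expr0 mulr1.
have runj' := running_prev runj; apply: le_trans (IH runj').
have [acc rej] := running_step runj; rewrite nacc_S.
case: (boolP (accepted j)) => [aj|/rej [_ ->]]; last by rewrite addn0.
have q0 : 0 <= 1 + eps * sigma / Q.
  by rewrite addr_ge0 // divr_ge0 ?mulr_ge0 // ltW // Qe_gt0.
rewrite /= addn1 (exprS (1 + _)) mulrA ler_wpM2r ?exprn_ge0 //.
apply: potential_step Qe_gt0 (ltW eps_gt0) (lam_ge runj') sigma0 (sqr_ge0 _) sK _.
exact: running_contracts contr runj aj xsX.
Qed.

Lemma nacc_le_dist0 {j} : running j -> (nacc j)%:R <= d0 ^+ 2 * Q / eps ^+ 2.
Proof.
move=> runj; have eQ0 : 0 < eps ^+ 2 / Q by rewrite divr_gt0 ?exprn_gt0 ?Qe_gt0.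
rewrite -mulrA -invf_div ler_pdivlMr //; apply: le_dist0_sqr => // xs xsX.
by have := sqr_dist_nacc_le runj xsX; have := sqr_ge0 (enorm (xs - ctr j)); lra.
Qed.

Lemma nacc_le_ln_dist0 {j} {sigma K : R} : 0 < sigma -> 0 < K -> sigma * K <= eps ->
  contracts_at sigma -> running j ->
  (nacc j)%:R <= (1 + Q / (eps * sigma)) * ln (1 + d0 ^+ 2 / K).
Proof.
move=> sigma0 K0 sK contr runj.
have q0 : 0 < eps * sigma / Q by rewrite divr_gt0 ?mulr_gt0 ?Qe_gt0.
rewrite -[Q / _]invf_div; apply: geometric_count_le => //.
have pow0 : 0 <= (1 + eps * sigma / Q) ^+ nacc j by rewrite exprn_ge0 // addr_ge0 // ltW.
rewrite -lerBlDl ler_pdivlMr // mulrC.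
apply: le_dist0_sqr => // xs xsX; rewrite mulrBr mulr1 lerBlDr.
apply: le_trans (potential_nacc_le (ltW sigma0) sK contr runj xsX).
by rewrite ler_wpM2r // lerDr sqr_ge0.
Qed.

Lemma running_le_ucs_bound {j} : running j -> 0 <= mu -> nu <= mu ->
  (j%:R%:E <= ucs_bound mu nu Q d0 chi lam0 eps)%E.
Proof.
move=> runj mu0 nu_mu; rewrite -(nacc_add_nrej j).
apply: le_ucs_bound eps_gt0 Qe_gt0 chi_ge0 mu0 nu_ge0 (nrej_le runj) _ _ _.
- exact: nacc_le_dist0 runj.
- move=> mu_gt0 nu_gt0.
  have nuK : nu * (eps / mu) <= eps.
    by rewrite mulrCA ger_pMr // ler_pdivrMr // mul1r.
  have := nacc_le_ln_dist0 nu_gt0 (divr_gt0 eps_gt0 mu_gt0) nuK contracts_at_nu runj.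
  have -> : d0 ^+ 2 / (eps / mu) = mu * d0 ^+ 2 / eps by field; rewrite !gt_eqF.
  by rewrite [eps * nu]mulrC.
- move=> mu_gt0 chi_gt0; have mc0 := mulr_gt0 mu_gt0 chi_gt0.
  have mcK : mu * chi * (eps / (mu * chi)) <= eps.
    by rewrite mulrCA divff ?mulr1 ?gt_eqF.
  have := nacc_le_ln_dist0 mc0 (divr_gt0 eps_gt0 mc0) mcK (contracts_at_mu_chi chi_gt0) runj.
  move/le_trans; apply; apply: ln_rate_le mu_gt0 (ltW Qe_gt0) eps_gt0 (sqr_ge0 _).
  by rewrite chi_gt0 ltW.
Qed.

End Run.

End Ucs.

Theorem theorem2p2 (R : realType) (n : nat)
  (f h : 'rV[R]_n -> \bar R) (f' : 'rV[R]_n -> 'rV[R]_n) (Mf Lf : R)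
  (x0 : 'rV[R]_n) (chi lam0 eps mu nu : R)
  (lam : nat -> R) (ctr xs : nat -> 'rV[R]_n) :
  proper_fun f -> convex_fun f -> lsc_fun f ->
  proper_fun h -> convex_fun h -> lsc_fun h ->
  dom h `<=` dom f ->
  (forall x, x \in dom h -> is_subgrad f x (f' x)) ->
  0 <= Mf -> 0 <= Lf ->
  (forall x y, x \in dom h -> y \in dom h ->
     enorm (f' x - f' y) <= 2 * Mf + Lf * enorm (x - y)) ->
  Xstar (phi_of f h) !=set0 ->
  x0 \in dom h -> 0 <= chi < 1 -> 0 < lam0 -> 0 < eps ->
  is_mu (phi_of f h) mu -> is_mu h nu ->
  UCS_run f h f' x0 chi lam0 eps lam ctr xs ->
  exists j : nat,
    ((j%:R)%:E <= ucs_bound mu nu (Qe Mf Lf chi lam0 eps)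
                   (dist0 (phi_of f h) x0) chi lam0 eps)%E /\
    stop_test (phi_of f h) eps (xs j).
Proof.
move=> [fNy _] f_cvx _ [hNy _] h_cvx _ dom_hf f'_sg Mf0 Lf0 f'_growth Xne x0D
  /andP[chi0 chi1] lam00 eps0 [mu0 [phi_sc mu_max]] [nu0 [h_sc _]] run.
have nu_le_mu : nu <= mu by apply: mu_max nu0 _; apply: phi_strongly_convex_nu.
apply: exists_first_le (ucs_bound_le_fin _ _ _ _ _ _ _) _ => j runj.
exact: running_le_ucs_bound run lam00 x0D Xne j runj mu0 nu_le_mu.
Qed.
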